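(* Let $G=(V,E)$ be a graph on $n$ vertices such that $\deg(u)+\deg(v)\geq n+d-2$ for all pairs of distinct non-adjacent vertices $u,v$. If there is a vertex $w\in V$ such that every pair of non-adjacent vertices $u,v\in N_G(w)$ is $\mathcal{R}_d$-linked in $G$, then $G$ is rigid in $\mathbb{R}^d$.
   Context: A graph is rigid in $\mathbb{R}^d$ if some (equivalently every) generic $d$-dimensional bar-and-joint framework of it (coordinates algebraically independent over $\mathbb{Q}$) admits no continuous edge-length-preserving motion changing some pairwise distance. $r_d$ is the rank function of the $d$-dimensional generic rigidity matroid on edge sets (linear independence of rows of the rigidity matrix of a generic framework); a non-adjacent pair $\{u,v\}$ is $\mathcal{R}_d$-linked in $G$ if $r_d(G+uv)=r_d(G)$. *)

From HB Require Import structures.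
From mathcomp Require Import all_boot all_order all_algebra.
From mathcomp Require Import mpoly.
From mathcomp Require Import reals.

Set Implicit Arguments.
Unset Strict Implicit.
Unset Printing Implicit Defensive.

Import Order.TTheory GRing.Theory Num.Theory.
Local Open Scope ring_scope.

Definition simple_graph (n : nat) (e : rel 'I_n) : Prop :=
  ssrbool.symmetric e /\ ssrbool.irreflexive e.

Definition deg (n : nat) (e : rel 'I_n) (u : 'I_n) : nat := #|[set v | e u v]|.
Definition nbhd (n : nat) (e : rel 'I_n) (w : 'I_n) : {set 'I_n} := [set v | e w v].

Definition add_edge (n : nat) (e : rel 'I_n) (u v : 'I_n) : rel 'I_n :=
  fun x y => [|| e x y, (x == u) && (y == v) | (x == v) && (y == u)].

(** A d-dimensional framework of a graph on 'I_n : row i is the position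
    p(i) in R^d. *)
Notation framework R n d := 'M[R]_(n, d).

(** Generic framework: the n*d coordinates are algebraically independent
    over Q, i.e. no nonzero rational polynomial in n*d variables vanishes
    at them. *)
Definition generic (R : realType) (n d : nat) (P : framework R n d) : Prop :=
  forall q : {mpoly rat[n * d]}, q != 0 ->
    (map_mpoly (ratr : rat -> R) q).@[fun j => mxvec P 0 j] != 0.

Definition sqdist (R : realType) (n d : nat) (P : framework R n d) (i j : 'I_n) : R :=
  \sum_(k < d) (P i k - P j k) ^+ 2.

Definition in01 (R : realType) (t : R) : bool := (0 <= t) && (t <= 1).

Definition continuous_on01 (R : realType) (n d : nat)
  (f : R -> framework R n d) : Prop :=
  forall t, in01 t -> forall eps : R, 0 < eps ->
    exists2 delta : R, 0 < delta &
      forall s, in01 s -> `|s - t| < delta ->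
        forall i k, `|f s i k - f t i k| < eps.

Definition nontrivial_motion (R : realType) (n d : nat) (e : rel 'I_n)
  (P : framework R n d) : Prop :=
  exists f : R -> framework R n d,
    [/\ continuous_on01 f, f 0 = P,
        (forall t, in01 t -> forall u v, e u v -> sqdist (f t) u v = sqdist P u v) &
        exists t, exists u, exists v,
          in01 t /\ sqdist (f t) u v != sqdist P u v].

(** G is rigid in R^d: every generic framework admits no such motion
    (the context says "some (equivalently every)"; we use "every"). *)
Definition rigid (R : realType) (n d : nat) (e : rel 'I_n) : Prop :=
  forall P : framework R n d, generic P -> ~ nontrivial_motion e P.

(** Rigidity matrix of (G,P): one row (flattened via mxvec) for each ordered
    pair (u,v) with e u v (the rows for (u,v) and (v,u) are opposite, and
    pairs that are not edges give zero rows, so the rank is that of the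
    usual rigidity matrix). *)
Definition rig_row (R : realType) (n d : nat) (e : rel 'I_n)
  (P : framework R n d) (uv : 'I_n * 'I_n) : 'M[R]_(n, d) :=
  if e uv.1 uv.2 then
    \matrix_(i, k) (((i == uv.1)%:R - (i == uv.2)%:R) * (P uv.1 k - P uv.2 k))
  else 0.

Definition rigidity_matrix (R : realType) (n d : nat) (e : rel 'I_n)
  (P : framework R n d) : 'M[R]_(#|{: 'I_n * 'I_n}|, n * d) :=
  \matrix_(a < #|{: 'I_n * 'I_n}|) mxvec (rig_row e P (enum_val a)).

(** r_d(G) evaluated at the framework P (for generic P this is the generic
    rank). *)
Definition rank_at (R : realType) (n d : nat) (e : rel 'I_n)
  (P : framework R n d) : nat := \rank (rigidity_matrix e P).

(** {u,v} non-adjacent is R_d-linked in G: r_d(G+uv) = r_d(G), the rank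
    being computed at a generic framework (independent of the choice). *)
Definition Rd_linked (R : realType) (n d : nat) (e : rel 'I_n) (u v : 'I_n) : Prop :=
  forall P : framework R n d, generic P ->
    rank_at (add_edge e u v) P = rank_at e P.

From HB Require Import structures.
From mathcomp Require Import all_boot all_order all_algebra.
From mathcomp Require Import mpoly.
From mathcomp Require Import reals.
From mathcomp Require classical_sets.
From mathcomp Require Import ring zify.

Set Implicit Arguments.
Unset Strict Implicit.
Unset Printing Implicit Defensive.

Import Order.TTheory GRing.Theory Num.Theory.
Local Open Scope ring_scope.

(* Let P be generic and D an infinitesimal flex of (G, P). D has zero strain on
   every pair of the closed neighbourhood N[w]: on edges by definition, and on
   the non-adjacent pairs of N(w) because they are R_d-linked. By the degree
   condition, a vertex x outside N[w] has d common neighbours c_1, ..., c_d with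
   w; for any other vertex y, the points x, y, c_1, ..., c_d carry K_{d+2} minus
   the edge xy, which is infinitesimally rigid in generic position, so D has zero
   strain on xy as soon as it has on every y c_i. Hence D is trivial: the
   rigidity matrix of G has the row space of that of the complete graph.
   Rigidity follows as in Asimow and Roth. Along a motion f, the times t at which
   f t is congruent to P form a closed subset of [0, 1]. They form an open one
   because f t - f t0 is an infinitesimal flex of (G, f t0 + f t), whose rigidity
   matrix keeps, for t near t0, the rank of the complete graph at P: the rank is
   lower semicontinuous and at t = t0 it only depends on distances. *)

Lemma mul_tr_mxE (R : comNzRingType) m N p (A : 'M[R]_(m, N)) (B : 'M[R]_(p, N)) i j :
  (A *m B^T) i j = \sum_(k < N) A i k * B j k.
Proof. by rewrite mxE; apply: eq_bigr => k _; rewrite mxE. Qed.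

Section RigidityMatrix.
Variables (R : comNzRingType) (n d : nat).
Implicit Types (e : rel 'I_n) (P D : 'M[R]_(n, d)) (u v : 'I_n).

(* Half the derivative of the squared length of uv when P moves with velocity D. *)
Definition strain P D u v : R := \sum_(k < d) (P u k - P v k) * (D u k - D v k).

Definition inf_flex e P D : Prop := forall u v, e u v -> strain P D u v = 0.

(* [rig_row] and [rigidity_matrix] over any commutative ring (they coincide
   definitionally over [R]), so that they can be formed at a symbolic framework. *)
Definition rigidity_row e P (uv : 'I_n * 'I_n) : 'M[R]_(n, d) :=
  if e uv.1 uv.2 then
    \matrix_(i, k) (((i == uv.1)%:R - (i == uv.2)%:R) * (P uv.1 k - P uv.2 k))
  else 0.

Definition rigidity_mx e P : 'M[R]_(#|{: 'I_n * 'I_n}|, n * d) :=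
  \matrix_(a < #|{: 'I_n * 'I_n}|) mxvec (rigidity_row e P (enum_val a)).

Lemma strainC P D u v : strain P D u v = strain P D v u.
Proof. by apply: eq_bigr => k _; ring. Qed.

Lemma strainxx P D u : strain P D u u = 0.
Proof. by apply: big1 => k _; rewrite subrr mul0r. Qed.

Lemma mxvec_dotE (A B : 'M[R]_(n, d)) :
  (mxvec A *m (mxvec B)^T) 0 0 = \sum_(i < n) \sum_(k < d) A i k * B i k.
Proof.
rewrite mxE (reindex _ (curry_mxvec_bij _ _)) /= pair_bigA /=.
by apply: eq_bigr => -[i k] _ /=; rewrite !mxE !mxvecE.
Qed.

Lemma rigidity_row_dotE e P D u v :
  \sum_(i < n) \sum_(k < d) rigidity_row e P (u, v) i k * D i k =
  if e u v then strain P D u v else 0.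
Proof.
rewrite /rigidity_row /=; case: (e u v); last first.
  by apply: big1 => i _; apply: big1 => k _; rewrite mxE mul0r.
rewrite exchange_big; apply: eq_bigr => k _ /=.
have pick_row (z : 'I_n) (c : R) : \sum_(i < n) (i == z)%:R * c * D i k = c * D z k.
  rewrite (bigD1 z) //= eqxx mul1r big1 ?addr0 // => i /negPf ->.
  by rewrite !mul0r.
under eq_bigr do rewrite mxE !mulrBl.
by rewrite sumrB !pick_row; ring.
Qed.

Lemma rigidity_mx_mulE e P D a :
  (rigidity_mx e P *m (mxvec D)^T) a 0 =
  let: (u, v) := enum_val a in if e u v then strain P D u v else 0.
Proof.
have -> : (rigidity_mx e P *m (mxvec D)^T) a 0 =
    (mxvec (rigidity_row e P (enum_val a)) *m (mxvec D)^T) 0 0.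
  by rewrite !mxE; apply: eq_bigr => j _; rewrite !mxE.
by rewrite mxvec_dotE; case: (enum_val a) => u v; rewrite rigidity_row_dotE.
Qed.

Lemma rigidity_mx_flexP e P D :
  rigidity_mx e P *m (mxvec D)^T = 0 <-> inf_flex e P D.
Proof.
split=> [/matrixP flexD u v euv | flexD].
  by have := flexD (enum_rank (u, v)) 0; rewrite rigidity_mx_mulE enum_rankK euv mxE.
apply/matrixP => a z; rewrite (ord1 z) rigidity_mx_mulE mxE.
by case: (enum_val a) => u v; case: ifP => // /flexD.
Qed.

Lemma rigidity_mxZ e P (c : R) : rigidity_mx e (c *: P) = c *: rigidity_mx e P.
Proof.
apply/matrixP => a j; rewrite !mxE; case/mxvec_indexP: j => i k.
by rewrite !mxvecE /rigidity_row; case: (e _ _); rewrite !mxE ?mulr0 //; ring.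
Qed.

End RigidityMatrix.

Lemma map_rigidity_mx (R S : comNzRingType) (f : {rmorphism R -> S}) n d
    (e : rel 'I_n) (P : 'M[R]_(n, d)) :
  map_mx f (rigidity_mx e P) = rigidity_mx e (map_mx f P).
Proof.
apply/matrixP => a j; rewrite !mxE; case/mxvec_indexP: j => i k.
rewrite !mxvecE /rigidity_row; case: (e _ _); last by rewrite !mxE rmorph0.
by rewrite !mxE rmorphM !rmorphB !rmorph_nat.
Qed.

Section MatrixRank.
Variable F : fieldType.

Lemma submx_kerP m1 m2 N (A : 'M[F]_(m1, N)) (B : 'M[F]_(m2, N)) :
  reflect (forall c : 'cV_N, A *m c = 0 -> B *m c = 0) (B <= A)%MS.
Proof.
apply: (iffP idP) => [/submxP[X ->] c Ac0 | kerAB]; first by rewrite -mulmxA Ac0 mulmx0.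
rewrite submxE; apply/eqP/matrixP => i j.
have := kerAB (col j (cokermx A)).
rewrite !colE [A *m _]mulmxA [B *m _]mulmxA mulmx_coker mul0mx -colE.
by move=> /(_ erefl)/matrixP/(_ i 0); rewrite !mxE.
Qed.

Lemma mxrank_mxsub_det m N s (A : 'M[F]_(m, N)) (f : 'I_s -> 'I_m) (g : 'I_s -> 'I_N) :
  \det (mxsub f g A) != 0 -> (s <= \rank A)%N.
Proof.
move=> detA; have /mxrank_unit <- : mxsub f g A \in unitmx by rewrite unitmxE unitfE.
rewrite -[X in mxsub _ _ X]mulmx1 mxsub_mul rowsubE -mulmxA.
exact: leq_trans (mxrankM_maxr _ _) (mxrankM_maxl _ _).
Qed.

Lemma mxrank_minor m N (A : 'M[F]_(m, N)) :
  exists f : 'I_(\rank A) -> 'I_m, exists g : 'I_(\rank A) -> 'I_N,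
    \det (mxsub f g A) != 0.
Proof.
set A1 := rowsub (maxrankfun A) A.
have A1full : row_full A1^T by rewrite /row_full mxrank_tr; exact: maxrowsub_free.
exists (maxrankfun A), (fullrankfun A1full).
have -> : mxsub (maxrankfun A) (fullrankfun A1full) A =
    (rowsub (fullrankfun A1full) A1^T)^T by apply/matrixP => i j; rewrite !mxE.
by rewrite det_tr -unitfE -unitmxE fullrowsub_unit.
Qed.

End MatrixRank.

Lemma mulmx_tr_eq0 (K : realFieldType) m N (Y : 'M[K]_(m, N)) :
  Y *m Y^T = 0 -> Y = 0.
Proof.
move=> /matrixP YY0; apply/matrixP => i j; rewrite [RHS]mxE.
have := YY0 i i; rewrite mul_tr_mxE mxE => sumY2.
have /eqP := @psumr_eq0P _ _ predT _ (fun k _ => sqr_ge0 (Y i k)) sumY2 j isT.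
by rewrite mulf_eq0 orbb => /eqP.
Qed.

Lemma mxrank_mul_tr (K : realFieldType) m N (B : 'M[K]_(m, N)) :
  \rank (B *m B^T) = \rank B.
Proof.
apply/eqP; rewrite eqn_leq mxrankM_maxl /=.
have /mxrankS : (kermx (B *m B^T) <= kermx B)%MS.
  apply/sub_kermxP/mulmx_tr_eq0.
  by rewrite trmx_mul mulmxA -(mulmxA (kermx _)) mulmx_ker mul0mx.
rewrite !mxrank_ker; have := rank_leq_row B; have := rank_leq_row (B *m B^T); lia.
Qed.

Lemma rigidity_mx_subrel (F : fieldType) n d (e1 e2 : rel 'I_n) (P : 'M[F]_(n, d)) :
  subrel e1 e2 -> (rigidity_mx e1 P <= rigidity_mx e2 P)%MS.
Proof.
move=> e12; apply/row_subP => a; rewrite rowK.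
have := row_sub a (rigidity_mx e2 P); rewrite rowK /rigidity_row.
by case E1: (e1 _ _); rewrite ?(e12 _ _ E1) // linear0 sub0mx.
Qed.

Lemma inf_flex_submx (F : fieldType) n d (e1 e2 : rel 'I_n) (P D : 'M[F]_(n, d)) :
  (rigidity_mx e2 P <= rigidity_mx e1 P)%MS -> inf_flex e1 P D -> inf_flex e2 P D.
Proof. by rewrite -!rigidity_mx_flexP => /submx_kerP; apply. Qed.

Section Congruence.
Variables (R : realType) (n d : nat).
Implicit Types (e : rel 'I_n) (P Q : 'M[R]_(n, d)).

Definition congruent Q P : Prop := forall a b, sqdist Q a b = sqdist P a b.

Definition edge_dot Q (u v u' v' : 'I_n) : R :=
  \sum_(k < d) (Q u k - Q v k) * (Q u' k - Q v' k).

Lemma edge_dot_sqdist Q u v u' v' :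
  edge_dot Q u v u' v' *+ 2 =
  sqdist Q u v' + sqdist Q v u' - sqdist Q u u' - sqdist Q v v'.
Proof.
rewrite /edge_dot /sqdist -sumrMnl -big_split /= -!sumrB.
by apply: eq_bigr => k _; ring.
Qed.

Lemma congruent_edge_dot Q P u v u' v' :
  congruent Q P -> edge_dot Q u v u' v' = edge_dot P u v u' v'.
Proof.
move=> QP; apply: (@mulIf _ 2%:R); first by rewrite pnatr_eq0.
by rewrite !mulr_natr !edge_dot_sqdist !QP.
Qed.

Lemma strain_rigidity_row e Q u v u' v' :
  strain Q (rigidity_row e Q (u', v')) u v =
  if e u' v' then
    ((u == u')%:R - (u == v')%:R - (v == u')%:R + (v == v')%:R) * edge_dot Q u v u' v'
  else 0.
Proof.
rewrite /rigidity_row /=; case: (e u' v'); last first.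
  by apply: big1 => k _; rewrite !mxE subrr mulr0.
by rewrite /edge_dot mulr_sumr; apply: eq_bigr => k _; rewrite !mxE; ring.
Qed.

Lemma congruent_gram e Q P : congruent Q P ->
  rigidity_mx e Q *m (rigidity_mx e Q)^T = rigidity_mx e P *m (rigidity_mx e P)^T.
Proof.
move=> QP; apply/matrixP => a b.
have gramE M : (rigidity_mx e M *m (rigidity_mx e M)^T) a b =
    (mxvec (rigidity_row e M (enum_val a)) *m
     (mxvec (rigidity_row e M (enum_val b)))^T) 0 0.
  by rewrite !mxE; apply: eq_bigr => j _; rewrite !mxE.
rewrite !gramE !mxvec_dotE; case: (enum_val a) => u v; case: (enum_val b) => u' v'.
by rewrite !rigidity_row_dotE !strain_rigidity_row (congruent_edge_dot _ _ _ _ QP).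
Qed.

Lemma congruent_mxrank e Q P :
  congruent Q P -> \rank (rigidity_mx e Q) = \rank (rigidity_mx e P).
Proof. by move=> QP; rewrite -mxrank_mul_tr (congruent_gram e QP) mxrank_mul_tr. Qed.

End Congruence.

Definition spoke_mx (R : zmodType) n d (P : 'M[R]_(n, d)) (c : 'I_d -> 'I_n) (z : 'I_n) :
  'M[R]_d := \matrix_(i, k) (P (c i) k - P z k).

Section GenericFramework.
Variables (R : realType) (n d : nat).
Local Notation poly := {mpoly rat[n * d]}.
Implicit Types (e : rel 'I_n) (P M : 'M[R]_(n, d)).

Definition coord_eval (M : 'M[R]_(n, d)) : {rmorphism poly -> R} :=
  meval (fun j => mxvec M 0 j) \o map_mpoly (ratr : rat -> R).

Definition symbolic_framework : 'M[poly]_(n, d) := \matrix_(i, k) 'X_(mxvec_index i k).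

Lemma coord_eval_X M i k : coord_eval M 'X_(mxvec_index i k) = M i k.
Proof. by rewrite /= map_mpolyX mevalXU mxvecE. Qed.

Lemma coord_eval_symbolic M : map_mx (coord_eval M) symbolic_framework = M.
Proof. by apply/matrixP => i k; rewrite !mxE coord_eval_X. Qed.

Lemma generic_mxrank_max P M m N (B : 'M[poly]_(m, N)) : generic P ->
  (\rank (map_mx (coord_eval M) B) <= \rank (map_mx (coord_eval P) B))%N.
Proof.
move=> genP; have [f [g]] := mxrank_minor (map_mx (coord_eval M) B).
have minorE M' : mxsub f g (map_mx (coord_eval M') B) = map_mx (coord_eval M') (mxsub f g B).
  by apply/matrixP => i j; rewrite !mxE.
rewrite minorE det_map_mx => detM; apply: (@mxrank_mxsub_det _ _ _ _ _ f g).
rewrite minorE det_map_mx; apply: genP.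
by apply: contraNneq detM => ->; rewrite rmorph0.
Qed.

Lemma rigidity_mx_symbolic e M :
  rigidity_mx e M = map_mx (coord_eval M) (rigidity_mx e symbolic_framework).
Proof. by rewrite map_rigidity_mx coord_eval_symbolic. Qed.

Lemma generic_rigidity_mxrank_max e P M : generic P ->
  (\rank (rigidity_mx e M) <= \rank (rigidity_mx e P))%N.
Proof.
by move=> genP; rewrite !(rigidity_mx_symbolic e); apply: generic_mxrank_max.
Qed.

Lemma generic_spoke_mx_unit P (c : 'I_d -> 'I_n) z :
  generic P -> injective c -> (forall i, c i != z) -> spoke_mx P c z \in unitmx.
Proof.
move=> genP inj_c cz.
pose M0 : 'M[R]_(n, d) := \matrix_(v, k) (v == c k)%:R.
have spokeM0 : spoke_mx M0 c z = 1%:M.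
  apply/matrixP => i k; rewrite !mxE (inj_eq inj_c).
  by rewrite [z == _]eq_sym (negPf (cz k)) subr0.
have spokeE M : spoke_mx M c z =
    map_mx (coord_eval M) (spoke_mx symbolic_framework c z).
  by apply/matrixP => i k; rewrite !mxE rmorphB !coord_eval_X.
have := generic_mxrank_max M0 (spoke_mx symbolic_framework c z) genP.
rewrite -!spokeE spokeM0 mxrank1 => rk.
by rewrite -row_free_unit /row_free eqn_leq rank_leq_row.
Qed.

End GenericFramework.

Lemma mx11_tr (K : comNzRingType) (x : 'M[K]_1) : x^T = x.
Proof. by rewrite [x]mx11_scalar tr_scalar_mx. Qed.

(* Infinitesimal rigidity of K_{d+2} minus the edge xy, in matrix form: the rows
   of U and V are P c_i - P x and D c_i - D x, w = P y - P x, eta = D y - D x, and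
   the last two hypotheses say that the edges c_i c_j, x c_i and y c_i have zero
   strain. *)
Lemma simplex_flex_trivial (K : numFieldType) d (U V : 'M[K]_d) (w eta : 'rV[K]_d) :
  U \in unitmx -> U - const_mx 1 *m w \in unitmx ->
  (U *m V^T)^T = - (U *m V^T) ->
  U *m eta^T + V *m w^T = (w *m eta^T) 0 0 *: const_mx 1 ->
  (w *m eta^T) 0 0 = 0.
Proof.
(* Write w = al U. Skew-symmetry of U V^T kills al V w^T, so that multiplying the
   last hypothesis by al gives s = s * sig with sig the sum of the al_i; and
   sig = 1 would make al a null combination of the rows of U - 1 w. *)
move=> unitU unitUw skewUV flexw; set s := (w *m eta^T) 0 0 in flexw *.
have [al alU] : {al | al *m U = w} by exists (w *m invmx U); rewrite mulmxKV.
pose sig := (al *m (const_mx 1 : 'cV_d)) 0 0.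
have alVw : al *m V *m w^T = 0.
  have wT : w^T = U^T *m al^T by rewrite -alU trmx_mul.
  set x := al *m V *m w^T.
  have xE : x = al *m (U *m V^T)^T *m al^T by rewrite /x wT trmx_mul trmxK !mulmxA.
  have quad_tr (M : 'M_d) : (al *m M *m al^T)^T = al *m M^T *m al^T.
    by rewrite !trmx_mul trmxK mulmxA.
  have : x = - x.
    rewrite {1}xE skewUV mulmxN mulNmx; congr (- _).
    by rewrite -[x]mx11_tr xE quad_tr trmxK.
  move=> /eqP; rewrite -subr_eq0 opprK -mulr2n -scaler_nat scaler_eq0 pnatr_eq0 /=.
  by move/eqP.
have s_sig : s = s * sig.
  have := congr1 (fun M => (al *m M) 0 0) flexw.
  by rewrite /= mulmxDr !mulmxA alU alVw addr0 -scalemxAr [in RHS]mxE.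
have sig1 : sig != 1.
  apply/eqP => sig1; have alUw : al *m (U - const_mx 1 *m w) = 0.
    rewrite mulmxBr alU mulmxA [al *m _]mx11_scalar -/sig sig1 mul_scalar_mx.
    by rewrite scale1r subrr.
  have al0 : al = 0 by rewrite -(mulmxK unitUw al) alUw mul0mx.
  by move: sig1; rewrite /sig al0 mul0mx mxE => /eqP; rewrite eq_sym oner_eq0.
apply/eqP; move: s_sig => /eqP; rewrite -subr_eq0 -{1}[s]mulr1 -mulrBr mulf_eq0.
by rewrite subr_eq0 [1 == _]eq_sym (negPf sig1) orbF.
Qed.

Lemma strain_simplex (R : numFieldType) n d (P D : 'M[R]_(n, d))
    (c : 'I_d -> 'I_n) (x y : 'I_n) :
  spoke_mx P c x \in unitmx -> spoke_mx P c y \in unitmx ->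
  (forall i, strain P D x (c i) = 0) -> (forall i, strain P D y (c i) = 0) ->
  (forall i j, strain P D (c i) (c j) = 0) -> strain P D x y = 0.
Proof.
move=> unitx unity flex_x flex_y flex_c.
pose w := \row_k (P y k - P x k); pose eta := \row_k (D y k - D x k).
have -> : strain P D x y = (w *m eta^T) 0 0.
  by rewrite mul_tr_mxE; apply: eq_bigr => k _; rewrite !mxE; ring.
apply: (@simplex_flex_trivial _ _ (spoke_mx P c x) (spoke_mx D c x)) => //.
- suff -> : spoke_mx P c x - const_mx 1 *m w = spoke_mx P c y by [].
  by apply/matrixP => i k; rewrite !mxE big_ord1 !mxE; ring.
- apply/matrixP => i j; rewrite [LHS]mxE [RHS]mxE !mul_tr_mxE; apply/eqP.
  rewrite -addr_eq0.
  have -> : \sum_k spoke_mx P c x j k * spoke_mx D c x i k +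
            \sum_k spoke_mx P c x i k * spoke_mx D c x j k =
            strain P D x (c i) + strain P D x (c j) - strain P D (c i) (c j).
    by rewrite -!big_split /= -sumrB; apply: eq_bigr => k _; rewrite !mxE; ring.
  by rewrite !flex_x flex_c addr0 subr0.
- apply/matrixP => i z; rewrite (ord1 z) [LHS]mxE [RHS]mxE !mul_tr_mxE mxE mulr1.
  have -> : \sum_k spoke_mx P c x i k * eta 0 k + \sum_k spoke_mx D c x i k * w 0 k =
            \sum_k w 0 k * eta 0 k - strain P D y (c i) + strain P D x (c i).
    by rewrite -!big_split /= -sumrB -big_split /=; apply: eq_bigr => k _; rewrite !mxE; ring.
  by rewrite flex_x flex_y subr0 addr0.
Qed.

Lemma Rd_linked_strain (R : realType) n d (e : rel 'I_n) (P D : 'M[R]_(n, d)) u v :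
  Rd_linked R d e u v -> generic P -> inf_flex e P D -> strain P D u v = 0.
Proof.
move=> linked genP flexD; have := linked P genP; rewrite /rank_at => rk.
have sub : (rigidity_mx e P <= rigidity_mx (add_edge e u v) P)%MS.
  by apply: rigidity_mx_subrel => a b eab; rewrite /add_edge eab.
have /(inf_flex_submx (D := D)) : (rigidity_mx (add_edge e u v) P <= rigidity_mx e P)%MS.
  by have [_ <-] := mxrank_leqif_sup sub; apply/eqP.
by apply => //; rewrite /add_edge !eqxx orbT.
Qed.

Section GenericInfRigidity.
Variables (R : realType) (n d : nat) (e : rel 'I_n) (w : 'I_n) (P D : 'M[R]_(n, d)).
Hypotheses (e_sym : ssrbool.symmetric e) (e_irr : irreflexive e).
Hypothesis ore : forall u v, u != v -> ~~ e u v -> (n + d - 2 <= deg e u + deg e v)%N.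
Hypothesis linked : forall u v, u \in nbhd e w -> v \in nbhd e w -> u != v -> ~~ e u v ->
  Rd_linked R d e u v.
Hypotheses (genP : generic P) (flexD : inf_flex e P D).

Let in_closed_nbhd a := (a == w) || e w a.

Let nbhd_in_closed z : e w z -> in_closed_nbhd z.
Proof. by rewrite /in_closed_nbhd => ->; rewrite orbT. Qed.

Lemma common_nbhd_card x : x != w -> ~~ e w x -> (d <= #|nbhd e x :&: nbhd e w|)%N.
Proof.
move=> xw nwx; have nxw : ~~ e x w by rewrite e_sym.
have := ore xw nxw; rewrite /deg -/(nbhd e x) -/(nbhd e w) -cardsUI.
have : (#|nbhd e x :|: nbhd e w| + 2 <= n)%N.
  have card_xw : #|[set x; w]| = 2%N by rewrite cards2 xw.
  apply: (@leq_trans (#|~: [set x; w]| + 2)%N); last first.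
    by rewrite -card_xw addnC cardsC card_ord.
  rewrite leq_add2r; apply/subset_leq_card/subsetP => v.
  rewrite !inE negb_or => /orP[] exv; apply/andP; split;
    by apply: contraTneq exv => ->; rewrite ?e_irr.
move: #|_ :|: _| #|_ :&: _| => ? ? *; lia.
Qed.

Lemma strain_closed_nbhd a b :
  in_closed_nbhd a -> in_closed_nbhd b -> strain P D a b = 0.
Proof.
have [-> | ab] := eqVneq a b; first by rewrite strainxx.
case eab: (e a b); first by move=> _ _; apply: flexD.
case/orP=> [/eqP -> | wa]; case/orP=> [/eqP -> | wb].
- by rewrite strainxx.
- exact: flexD.
- by rewrite strainC; apply: flexD.
- by apply: Rd_linked_strain genP flexD; apply: linked; rewrite ?inE ?eab.
Qed.

Lemma strain_outside x b : ~~ in_closed_nbhd x ->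
  (forall z, e x z -> e w z -> strain P D b z = 0) -> strain P D x b = 0.
Proof.
rewrite negb_or => /andP[xw nwx] flex_b.
have [-> | xb] := eqVneq x b; first by rewrite strainxx.
case exb: (e x b); first exact: flexD.
have common := common_nbhd_card xw nwx.
pose c (i : 'I_d) := enum_val (widen_ord common i).
have c_common i : e x (c i) && e w (c i) by have := enum_valP (widen_ord common i); rewrite !inE.
have inj_c : injective c by move=> i j /enum_val_inj/(congr1 val)/= /ord_inj.
apply: (@strain_simplex _ _ _ P D c).
- apply: generic_spoke_mx_unit => // i; apply: contraTneq (c_common i) => ->.
  by rewrite e_irr.
- apply: generic_spoke_mx_unit => // i; apply: contraTneq (c_common i) => ->.
  by rewrite exb.
- by move=> i; apply: flexD; case/andP: (c_common i).
- by move=> i; apply: flex_b; case/andP: (c_common i).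
- by move=> i j; apply: strain_closed_nbhd; apply: nbhd_in_closed;
    [case/andP: (c_common i) | case/andP: (c_common j)].
Qed.

Lemma generic_strain_trivial a b : strain P D a b = 0.
Proof.
have outside_closed x y : ~~ in_closed_nbhd x -> in_closed_nbhd y -> strain P D x y = 0.
  move=> Nx Sy; apply: strain_outside => // z _ wz.
  exact/strain_closed_nbhd/nbhd_in_closed.
case Sa: (in_closed_nbhd a); case Sb: (in_closed_nbhd b).
- exact: strain_closed_nbhd.
- by rewrite strainC; apply: outside_closed; rewrite ?Sb.
- by apply: outside_closed; rewrite ?Sa.
apply: strain_outside; first by rewrite Sa.
move=> z _ wz; apply: outside_closed (nbhd_in_closed wz).
by rewrite Sb.
Qed.

End GenericInfRigidity.

Section Continuity01.
Variable R : realType.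
Implicit Types (f g : R -> R) (t : R).

Definition cont01_at g t0 : Prop :=
  forall eps : R, 0 < eps -> exists2 dl : R, 0 < dl &
    forall t, in01 t -> `|t - t0| < dl -> `|g t - g t0| < eps.

Lemma eq_cont01_at f g t0 : f =1 g -> cont01_at f t0 -> cont01_at g t0.
Proof.
move=> fg cf eps eps_gt0; have [dl dl_gt0 near_f] := cf eps eps_gt0.
by exists dl => // t t01 tdl; rewrite -!fg; apply: near_f.
Qed.

Lemma cont01_at_cst (c : R) t0 : cont01_at (fun=> c) t0.
Proof. by move=> eps eps_gt0; exists 1 => // t _ _; rewrite subrr normr0. Qed.

Lemma cont01_atD f g t0 :
  cont01_at f t0 -> cont01_at g t0 -> cont01_at (fun t => f t + g t) t0.
Proof.
move=> cf cg eps eps_gt0; have eps2_gt0 : 0 < eps / 2 by rewrite divr_gt0.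
have [df df_gt0 near_f] := cf _ eps2_gt0; have [dg dg_gt0 near_g] := cg _ eps2_gt0.
exists (Num.min df dg) => [|t t01]; first by rewrite lt_min df_gt0 dg_gt0.
rewrite lt_min => /andP[tdf tdg].
have -> : f t + g t - (f t0 + g t0) = (f t - f t0) + (g t - g t0) by ring.
rewrite (splitr eps); apply: le_lt_trans (ler_normD _ _) _.
by rewrite ltrD // ?near_f ?near_g.
Qed.

Lemma cont01_atN f t0 : cont01_at f t0 -> cont01_at (fun t => - f t) t0.
Proof.
move=> cf eps eps_gt0; have [dl dl_gt0 near_f] := cf eps eps_gt0.
by exists dl => // t t01 tdl; rewrite -opprD normrN; apply: near_f.
Qed.

Lemma cont01_atB f g t0 :
  cont01_at f t0 -> cont01_at g t0 -> cont01_at (fun t => f t - g t) t0.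
Proof. by move=> cf cg; apply/cont01_atD/cont01_atN. Qed.

Lemma cont01_atM f g t0 :
  cont01_at f t0 -> cont01_at g t0 -> cont01_at (fun t => f t * g t) t0.
Proof.
move=> cf cg eps eps_gt0.
pose A := `|f t0| + 1; pose B := `|g t0| + 1.
have A_gt0 : 0 < A by rewrite ltr_pwDr.
have B_gt0 : 0 < B by rewrite ltr_pwDr.
have epsB_gt0 : 0 < eps / (2 * B) by rewrite divr_gt0 ?mulr_gt0.
have epsA_gt0 : 0 < Num.min 1 (eps / (2 * A)) by rewrite lt_min ltr01 divr_gt0 ?mulr_gt0.
have [df df_gt0 near_f] := cf _ epsB_gt0; have [dg dg_gt0 near_g] := cg _ epsA_gt0.
exists (Num.min df dg) => [|t t01]; first by rewrite lt_min df_gt0 dg_gt0.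
rewrite lt_min => /andP[/(near_f t t01) ft /(near_g t t01)].
rewrite lt_min => /andP[gt1 gtA].
have gtB : `|g t| <= B.
  rewrite -[g t](subrK (g t0)) /B addrC; apply: le_trans (ler_normD _ _) _.
  by rewrite lerD2l ltW.
have -> : f t * g t - f t0 * g t0 = (f t - f t0) * g t + f t0 * (g t - g t0) by ring.
apply: le_lt_trans (ler_normD _ _) _; rewrite !normrM (splitr eps).
apply: ltr_leD.
  apply: le_lt_trans (_ : `|f t - f t0| * B < _); first by rewrite ler_wpM2l.
  by rewrite -ltr_pdivlMr // -mulrA -invfM.
apply: le_trans (_ : A * `|g t - g t0| <= _).
  by rewrite ler_wpM2r // /A lerDl.
by rewrite mulrC -ler_pdivlMr // -mulrA -invfM ltW.
Qed.

Lemma cont01_at_sum (I : Type) (s : seq I) (F : I -> R -> R) t0 :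
  (forall i, cont01_at (F i) t0) -> cont01_at (fun t => \sum_(i <- s) F i t) t0.
Proof.
move=> cF; elim: s => [|i s IHs].
  by apply: eq_cont01_at (cont01_at_cst 0 t0) => t; rewrite big_nil.
by apply: eq_cont01_at (cont01_atD (cF i) IHs) => t; rewrite big_cons.
Qed.

Lemma cont01_at_prod (I : Type) (s : seq I) (F : I -> R -> R) t0 :
  (forall i, cont01_at (F i) t0) -> cont01_at (fun t => \prod_(i <- s) F i t) t0.
Proof.
move=> cF; elim: s => [|i s IHs].
  by apply: eq_cont01_at (cont01_at_cst 1 t0) => t; rewrite big_nil.
by apply: eq_cont01_at (cont01_atM (cF i) IHs) => t; rewrite big_cons.
Qed.

Lemma cont01_atX f k t0 : cont01_at f t0 -> cont01_at (fun t => f t ^+ k) t0.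
Proof.
move=> cf; elim: k => [|k IHk].
  by apply: eq_cont01_at (cont01_at_cst 1 t0) => t; rewrite expr0.
by apply: eq_cont01_at (cont01_atM cf IHk) => t; rewrite exprS.
Qed.

Lemma cont01_at_meval k (p : {mpoly R[k]}) (v : R -> 'I_k -> R) t0 :
  (forall j, cont01_at (fun t => v t j) t0) -> cont01_at (fun t => p.@[v t]) t0.
Proof.
move=> cv; apply: eq_cont01_at (fun t => esym (mevalE (v t) p)) _.
apply: cont01_at_sum => m; apply: cont01_atM; first exact: cont01_at_cst.
by apply: cont01_at_prod => j; apply: cont01_atX.
Qed.

Lemma cont01_at_neq0 g t0 : cont01_at g t0 -> g t0 != 0 ->
  exists2 dl : R, 0 < dl & forall t, in01 t -> `|t - t0| < dl -> g t != 0.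
Proof.
move=> cg gt0_neq0.
have := cg `|g t0|; rewrite normr_gt0 => /(_ gt0_neq0)[dl dl_gt0 near_g].
exists dl => // t t01 tdl; apply: contraTneq (near_g t t01 tdl) => ->.
by rewrite sub0r normrN ltxx.
Qed.

Lemma continuous_on01_entry n d (f : R -> 'M[R]_(n, d)) t0 i k :
  continuous_on01 f -> in01 t0 -> cont01_at (fun t => f t i k) t0.
Proof.
move=> cf t01 eps eps_gt0; have [dl dl_gt0 near_f] := cf t0 t01 eps eps_gt0.
by exists dl => // t t'01 tdl; apply: near_f.
Qed.

End Continuity01.

Lemma real_induction01 (R : realType) (T : R -> Prop) :
  T 0 ->
  (forall s, in01 s -> 0 < s -> (forall t, 0 <= t -> t < s -> T t) -> T s) ->
  (forall s, in01 s -> T s ->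
     exists2 dl : R, 0 < dl & forall t, in01 t -> `|t - s| < dl -> T t) ->
  forall t, in01 t -> T t.
Proof.
move=> T0 T_left T_open.
pose S t := in01 t /\ forall t', 0 <= t' -> t' <= t -> T t'.
have S0 : S 0.
  split=> [|t' t'_ge0 t'_le0]; first by rewrite /in01 lexx ler01.
  by have -> : t' = 0 by apply/eqP; rewrite eq_le t'_le0 t'_ge0.
have supS : classical_sets.has_sup S by split; [exists 0 | exists 1 => t [/andP[]]].
pose s := sup S.
have s01 : in01 s.
  by rewrite /in01 (sup_upper_bound supS S0) ge_sup //; [exists 0 | move=> t [/andP[]]].
have T_below t : 0 <= t -> t < s -> T t.
  rewrite -subr_gt0 => t_ge0 /sup_adherent/(_ supS)[t' [_ St'] /ltW].
  by rewrite opprB addrCA subrr addr0 => tt'; apply: St'.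
have Ts : T s.
  have [-> | s_neq0] := eqVneq s 0; first exact: T0.
  by apply: T_left => //; rewrite lt_def s_neq0; case/andP: s01.
have T_upto r : 0 <= r -> r <= s -> T r.
  by move=> r_ge0; rewrite le_eqVlt => /orP[/eqP -> // | ]; apply: T_below.
move=> t t01; have [ts | st] := lerP t s; first by apply: T_upto; case/andP: t01.
have [dl dl_gt0 near_s] := T_open s s01 Ts.
pose t' := Num.min 1 (s + dl / 2).
have dl2_gt0 : 0 < dl / 2 by rewrite divr_gt0.
have st' : s < t' by rewrite lt_min (lt_le_trans st) ?(andP t01).2 //= ltrDl.
suff /(sup_upper_bound supS) : S t' by rewrite leNgt st'.
have t'01 : in01 t' by rewrite /in01 ge_min lexx (le_trans (andP s01).1 (ltW st')).
split=> // r r_ge0 rt'; have [rs | sr] := lerP r s; first exact: T_upto.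
apply: near_s; first by rewrite /in01 r_ge0 (le_trans rt') ?(andP t'01).2.
rewrite gtr0_norm ?subr_gt0 // ltrBlDl (le_lt_trans rt') // gt_min.
by rewrite ltrD2l ltr_pdivrMr // ltr_pMr // ltr1n orbT.
Qed.

Lemma near_rigidity_mxrank_ge (R : realType) n d (e : rel 'I_n) (M : R -> 'M[R]_(n, d)) t0 :
  (forall i k, cont01_at (fun t => M t i k) t0) ->
  exists2 dl : R, 0 < dl & forall t, in01 t -> `|t - t0| < dl ->
    (\rank (rigidity_mx e (M t0)) <= \rank (rigidity_mx e (M t)))%N.
Proof.
move=> cM; have [f [g]] := mxrank_minor (rigidity_mx e (M t0)).
pose q := \det (mxsub f g (rigidity_mx e (symbolic_framework n d))).
have minorE t : \det (mxsub f g (rigidity_mx e (M t))) = coord_eval (M t) q.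
  rewrite (rigidity_mx_symbolic e (M t)) -det_map_mx; congr (\det _).
  by apply/matrixP => i j; rewrite !mxE.
have cq : cont01_at (fun t => coord_eval (M t) q) t0.
  apply: cont01_at_meval => j; case/mxvec_indexP: j => i k.
  by apply: eq_cont01_at (cM i k) => t; rewrite mxvecE.
rewrite minorE => /(cont01_at_neq0 cq)[dl dl_gt0 near_q].
exists dl => // t t01 tdl; apply: (@mxrank_mxsub_det _ _ _ _ _ f g).
by rewrite minorE near_q.
Qed.

Definition complete_graph {n} : rel 'I_n := fun _ _ => true.

Lemma strain_sqdist (R : realType) n d (A B : 'M[R]_(n, d)) u v :
  strain (A + B) (B - A) u v = sqdist B u v - sqdist A u v.
Proof. by rewrite /strain /sqdist -sumrB; apply: eq_bigr => k _; rewrite !mxE; ring. Qed.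

Section AsimowRoth.
Variables (R : realType) (n d : nat) (e : rel 'I_n) (P : 'M[R]_(n, d)) (f : R -> 'M[R]_(n, d)).
Hypotheses (genP : generic P)
  (inf_rigid : (rigidity_mx complete_graph P <= rigidity_mx e P)%MS).
Hypotheses (cont_f : continuous_on01 f)
  (f_edges : forall t, in01 t -> forall u v, e u v -> sqdist (f t) u v = sqdist P u v).

Lemma motion_congruent_open t0 : in01 t0 -> congruent (f t0) P ->
  exists2 dl : R, 0 < dl & forall t, in01 t -> `|t - t0| < dl -> congruent (f t) P.
Proof.
move=> t0_01 ft0P; pose M t := f t0 + f t.
have rk_t0 : (\rank (rigidity_mx complete_graph P) <= \rank (rigidity_mx e (M t0)))%N.
  rewrite /M -mulr2n -scaler_nat rigidity_mxZ mxrank_scale_nz ?pnatr_eq0 //.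
  by rewrite (congruent_mxrank e ft0P) mxrankS.
have cM i k : cont01_at (fun t => M t i k) t0.
  apply: eq_cont01_at (cont01_atD (cont01_at_cst _ _) (continuous_on01_entry i k cont_f t0_01)).
  by move=> t; rewrite mxE.
have [dl dl_gt0 near_rk] := near_rigidity_mxrank_ge e cM.
exists dl => // t t01 tdl.
have full : (rigidity_mx complete_graph (M t) <= rigidity_mx e (M t))%MS.
  have sub : (rigidity_mx e (M t) <= rigidity_mx complete_graph (M t))%MS.
    exact: rigidity_mx_subrel.
  have [_ <-] := mxrank_leqif_sup sub; apply/eqP/anti_leq; rewrite mxrankS //=.
  apply: leq_trans (generic_rigidity_mxrank_max _ _ genP) _.
  exact: leq_trans rk_t0 (near_rk t t01 tdl).
have flex : inf_flex e (M t) (f t - f t0).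
  by move=> u v euv; rewrite strain_sqdist !f_edges ?subrr.
move=> a b; apply/eqP; rewrite -subr_eq0 -(ft0P a b) -strain_sqdist.
by apply/eqP/(inf_flex_submx full flex).
Qed.

Lemma motion_congruent_left s : in01 s -> 0 < s ->
  (forall t, 0 <= t -> t < s -> congruent (f t) P) -> congruent (f s) P.
Proof.
move=> s01 s_gt0 below a b; apply/eqP; apply: contraT => neq.
have cs : cont01_at (fun t => sqdist (f t) a b) s.
  apply: cont01_at_sum => k; apply: cont01_atX.
  by apply: cont01_atB; apply: continuous_on01_entry.
have := cs `|sqdist (f s) a b - sqdist P a b|; rewrite normr_gt0 subr_eq0.
move=> /(_ neq)[dl dl_gt0 near_s].
pose t := Num.max 0 (s - dl / 2).
have dl2_gt0 : 0 < dl / 2 by rewrite divr_gt0.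
have t_ge0 : 0 <= t by rewrite le_max lexx.
have ts : t < s by rewrite gt_max s_gt0 ltrBlDr ltrDl.
have t01 : in01 t by rewrite /in01 t_ge0 (le_trans (ltW ts)) ?(andP s01).2.
have tdl : `|t - s| < dl.
  rewrite distrC gtr0_norm ?subr_gt0 // ltrBlDr -ltrBlDl.
  apply: (@lt_le_trans _ _ (s - dl / 2)); last by rewrite le_max lexx orbT.
  by rewrite ltrD2l ltrN2 ltr_pdivrMr // ltr_pMr // ltr1n.
by have := near_s t t01 tdl; rewrite (below t t_ge0 ts) distrC ltxx.
Qed.

Lemma motion_congruent : f 0 = P -> forall t, in01 t -> congruent (f t) P.
Proof.
move=> f0; apply: real_induction01; first by rewrite f0.
  exact: motion_congruent_left.
exact: motion_congruent_open.
Qed.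

End AsimowRoth.

Lemma inf_rigid_no_motion (R : realType) n d (e : rel 'I_n) (P : 'M[R]_(n, d)) :
  generic P -> (rigidity_mx complete_graph P <= rigidity_mx e P)%MS ->
  ~ nontrivial_motion e P.
Proof.
move=> genP inf_rigid [f [cont_f f0 f_edges [t [u [v [t01]]]]]].
by rewrite (motion_congruent genP inf_rigid cont_f f_edges f0 t01) eqxx.
Qed.

Local Close Scope ring_scope.

Theorem lemma4p1 (R : realType) (n d : nat) (e : rel 'I_n) :
  simple_graph e ->
  (forall u v : 'I_n, u != v -> ~~ e u v -> n + d - 2 <= deg e u + deg e v) ->
  (exists w : 'I_n, forall u v : 'I_n,
      u \in nbhd e w -> v \in nbhd e w -> u != v -> ~~ e u v ->
      Rd_linked R d e u v) ->
  rigid R d e.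
Proof.
move=> [e_sym e_irr] ore [w linked] P genP; apply: (inf_rigid_no_motion genP).
apply/submx_kerP => c; rewrite -[c]trmxK -[(c^T)%R]vec_mxK !rigidity_mx_flexP => flexD u v _.
exact: generic_strain_trivial e_sym e_irr ore linked genP flexD u v.
Qed.
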